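(* Let $(g_t^* )_{t\in[0,1]}$ be a family of Lebesgue probability densities $g_t^*$ on $\mathbb{R}$ such that for every $s\in\mathbb{R}$ the function $t\mapsto g_t^*(s)$ is continuous on $[0,1]$ and $\int_{\mathbb{R}} \sup_{t\in[0,1]} g_t^*(s)\,ds<\infty$. Define \[ \|f\|_{g^*} := \int_{\mathbb{R}} \sup_{t\in[0,1]}\big(|f(t)|\,g_t^*(s)\big)\,ds, \qquad f\in E[0,1]. \] Then $\|\cdot\|_{g^*}$ is a $D$-norm; more precisely, for every real-valued random variable $X$ with Lebesgue density $h>0$, the process $\mathbf{Z}=(Z_t)_{t\in[0,1]}$ with $Z_t:=g_t^*(X)/h(X)$ is a generator and $\|f\|_{g^*}=E\big(\sup_{t\in[0,1]}|f(t)Z_t|\big)$ for all $f\in E[0,1]$.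
   Context: $E[0,1]$ denotes the set of all bounded real-valued functions on $[0,1]$ that have only finitely many discontinuities. $\bar C^+[0,1]$ denotes the set of non-negative continuous functions on $[0,1]$. A generator is a stochastic process $\mathbf{Z}=(Z_t)_{t\in[0,1]}$ with sample paths in $\bar C^+[0,1]$ such that $E(Z_t)=1$ for every $t\in[0,1]$ and $E(\sup_{t\in[0,1]}Z_t)<\infty$. A $D$-norm is a function on $E[0,1]$ of the form $\|f\|_D=E\big(\sup_{t\in[0,1]}|f(t)Z_t|\big)$, $f\in E[0,1]$, for some generator $\mathbf{Z}$; $\mathbf{Z}$ is then said to generate this $D$-norm. *)

From HB Require Import structures.
From mathcomp Require Import all_boot all_order all_algebra.
From mathcomp Require Import all_classical all_reals all_analysis.
Set Implicit Arguments. Unset Strict Implicit. Unset Printing Implicit Defensive.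
Import Order.TTheory GRing.Theory Num.Theory.
Import numFieldNormedType.Exports.
Local Open Scope classical_set_scope.
Local Open Scope ring_scope.

Definition I01 {R : realType} : set R := `[0%R, 1%R].

(* Functions are represented as R -> R; only values on [0,1] matter. *)
Definition E01 {R : realType} (f : R -> R) : Prop :=
  (exists M : R, forall t, I01 t -> `|f t| <= M) /\
  finite_set [set t | I01 t /\ ~ (f @ within I01 (nbhs t) --> f t)].

Definition sup01 {R : realType} (F : R -> R) : \bar R :=
  ereal_sup [set (F t)%:E | t in I01].

Definition is_generator {R : realType} (d : measure_display)
  (T : measurableType d) (P : probability T R) (Z : R -> T -> R) : Prop :=
  (forall t, I01 t -> measurable_fun setT (Z t)) /\
  (forall w, {within I01, continuous (fun t => Z t w)} /\
             (forall t, I01 t -> 0 <= Z t w)) /\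
  (forall t, I01 t -> (\int[P]_w (Z t w)%:E = 1)%E) /\
  (\int[P]_w sup01 (fun t => Z t w) < +oo)%E.

Definition Dnorm {R : realType} (d : measure_display)
  (T : measurableType d) (P : probability T R) (Z : R -> T -> R)
  (f : R -> R) : \bar R :=
  (\int[P]_w sup01 (fun t => (`|f t * Z t w|)%R))%E.

Definition gstar_norm {R : realType} (g : R -> R -> R) (f : R -> R) : \bar R :=
  (\int[lebesgue_measure]_s sup01 (fun t => (`|f t| * g t s)%R))%E.

Definition is_prob_density {R : realType} (p : R -> R) : Prop :=
  measurable_fun setT p /\ (forall s, 0 <= p s) /\
  (\int[lebesgue_measure]_s (p s)%:E = 1)%E.

Definition Zproc {R : realType} (T : Type) (g : R -> R -> R) (h : R -> R)
  (X : T -> R) : R -> T -> R :=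
  fun t w => g t (X w) / h (X w).

(* Since X has density h, E[phi(X)] = int phi h for every non-negative
   measurable phi: the Radon-Nikodym derivative of the law of X agrees a.e.
   with h.  For phi = sup_t |f(t)| g_t / h the factor 1/h cancels, which gives
   E sup_t |f(t) Z_t| = int sup_t |f(t)| g_t(s) ds; taking phi = g_t / h gives
   E Z_t = int g_t = 1.  The suprema are measurable because, off the finitely
   many discontinuities of f, the supremum over [0,1] is already the supremum
   over the rationals of [0,1] together with those discontinuities. *)

From HB Require Import structures.
From mathcomp Require Import all_boot all_order all_algebra.
From mathcomp Require Import all_classical all_reals all_analysis.
From mathcomp Require Import measurable_realfun lra.
Import Order.TTheory GRing.Theory Num.Theory.
Import numFieldNormedType.Exports.
Set Implicit Arguments. Unset Strict Implicit. Unset Printing Implicit Defensive.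
Local Open Scope classical_set_scope.
Local Open Scope ring_scope.

Section unit_interval.
Context {R : realType}.

Lemma I01P (t : R) : I01 t <-> 0 <= t <= 1.
Proof. by rewrite /I01 /= in_itv. Qed.

Lemma I01_rat_ball (t del : R) : I01 t -> 0 < del ->
  exists q : rat, I01 (ratr q : R) /\ ball t del (ratr q : R).
Proof.
move=> /I01P/andP[t0 t1] del0.
have [q] : exists q : rat, ratr q \in `](Num.max 0 (t - del)), Num.min 1 (t + del)[.
  by apply: rat_in_itvoo; rewrite lt_min !gt_max ltr01 /=; apply/and3P; split; lra.
rewrite in_itv /= lt_min !gt_max => /andP[/andP[q0 q1] /andP[q2 q3]].
exists q; split; first by apply/I01P; apply/andP; split; lra.
by rewrite /ball /= ltr_norml; apply/andP; split; lra.
Qed.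

Definition clamp01 (t : R) : R := if 0 <= t <= 1 then t else 0.

Definition sample01 (l : seq R) (n : nat) : R :=
  clamp01 (if odd n then nth 0 l n./2 else odflt 0 (omap ratr (unpickle n./2))).

Lemma sample01_I01 l n : I01 (sample01 l n).
Proof.
by apply/I01P; rewrite /sample01 /clamp01; case: ifP => // _; rewrite lexx ler01.
Qed.

Lemma sample01_seq (l : seq R) t : t \in l -> I01 t -> exists n, sample01 l n = t.
Proof.
move=> tl /I01P t01; exists (index t l).*2.+1.
by rewrite /sample01 /= odd_double /= uphalf_double nth_index // /clamp01 t01.
Qed.

Lemma sample01_rat l (q : rat) : I01 (ratr q : R) ->
  sample01 l (pickle q).*2 = ratr q.
Proof.
by move=> /I01P q01; rewrite /sample01 odd_double doubleK pickleK /= /clamp01 q01.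
Qed.

End unit_interval.

Lemma E01_continuous_off_seq {R : realType} (f : R -> R) : E01 f ->
  exists l : seq R, forall t, I01 t -> t \notin l -> f @ within I01 (nbhs t) --> f t.
Proof.
move=> [_ /finite_seqP[l discontinuities]]; exists l => t It /negP tl.
apply: contrapT => nc; apply: tl.
have : [set t | I01 t /\ ~ (f @ within I01 (nbhs t) --> f t)] t by [].
by rewrite discontinuities.
Qed.

Section sup01.
Context {R : realType}.
Local Open Scope ereal_scope.
Implicit Types F G : R -> R.

Lemma eq_sup01 F G : (forall t, I01 t -> F t = G t) -> sup01 F = sup01 G.
Proof. by move=> FG; rewrite /sup01; congr ereal_sup; apply: eq_imagel => t /FG ->. Qed.

Lemma sup01_ge0 F : (forall t, I01 t -> (0 <= F t)%R) -> 0 <= sup01 F.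
Proof.
move=> F0; have I01_0 : I01 (0%R : R) by apply/I01P; rewrite lexx ler01.
apply: (le_trans _ (ereal_sup_ubound _)); last by exists 0%R.
by rewrite lee_fin F0.
Qed.

Lemma sup01_Mr F (c : R) : (0 < c)%R ->
  sup01 (fun t => F t * c)%R = sup01 F * c%:E.
Proof.
move=> c0; rewrite muleC /sup01 -ereal_sup_pZl//; congr ereal_sup.
apply/seteqP; split.
  by move=> _ [t It <-]; exists (F t)%:E; [exists t|rewrite -EFinM mulrC].
by move=> _ [_ [t It <-] <-]; exists t => //; rewrite -EFinM mulrC.
Qed.

Lemma sup01_sample01 F (l : seq R) :
  (forall t, I01 t -> t \notin l -> (F @ within I01 (nbhs t) --> F t)%R) ->
  sup01 F = ereal_sup (range (fun n => (F (sample01 l n))%:E)).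
Proof.
move=> Fc; apply/eqP; rewrite eq_le; apply/andP; split; last first.
  by apply: ereal_sup_le => _ [n _ <-]; exists (sample01 l n) => //; exact: sample01_I01.
apply/ereal_supP => _ [t It <-].
have [tl|tl] := boolP (t \in l).
  by have [n <-] := sample01_seq tl It; apply: ereal_sup_ubound; exists n.
apply/lee_addgt0Pr => e e0.
have /cvgrPdist_lt/(_ e e0) := Fc t It tl.
rewrite near_withinE => /nbhs_ballP[del /= del0 near_t].
have [q [Iq tq]] := I01_rat_ball It del0.
have /ltr_normlP[_ Fq] := near_t _ tq Iq.
apply: (@le_trans _ _ (F (ratr q) + e)%:E); first by rewrite lee_fin; lra.
rewrite EFinD leeD2r//; apply: ereal_sup_ubound.
by exists (pickle q).*2 => //; rewrite sample01_rat.
Qed.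

Lemma measurable_sup01 d (T : measurableType d) (F : R -> T -> R) (l : seq R) :
  (forall t, I01 t -> measurable_fun setT (F t)) ->
  (forall s t, I01 t -> t \notin l ->
     ((fun u => F u s) @ within I01 (nbhs t) --> F t s)%R) ->
  measurable_fun setT (fun s => sup01 (F ^~ s)).
Proof.
move=> mF cF.
rewrite (_ : (fun s => _) = fun s => esups (fun n => (F (sample01 l n) s)%:E) 0%N).
  apply: measurable_fun_esups => n; apply/measurable_EFinP.
  exact/mF/sample01_I01.
apply/funext => s; rewrite (sup01_sample01 (cF s)) /esups.
by congr ereal_sup; apply/seteqP; split => _ [n _ <-]; exists n.
Qed.

End sup01.

Section integral_density.
Local Open Scope ereal_scope.
Context d (T : measurableType d) (R : realType).
Variables (mu : {sigma_finite_measure set T -> \bar R})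
  (nu : {finite_measure set T -> \bar R}) (h : T -> R).
Hypotheses (mh : measurable_fun setT h) (h_ge0 : forall x, (0 <= h x)%R)
  (nu_density : forall A, measurable A -> nu A = \int[mu]_(x in A) (h x)%:E).

Lemma dominates_density : nu `<< mu.
Proof.
apply/null_content_dominatesP => A mA muA0; rewrite nu_density//.
by apply: null_set_integral => //; apply/measurable_EFinP; exact: measurable_funTS.
Qed.

Lemma ae_eq_Radon_Nikodym_density :
  ae_eq mu setT (Radon_Nikodym_SigmaFinite.f nu mu) (EFin \o h).
Proof.
have numu := dominates_density.
apply: integral_ae_eq => //.
- exact: Radon_Nikodym_SigmaFinite.f_integrable.
- exact/measurable_EFinP.
- by move=> A _ mA; rewrite -Radon_Nikodym_SigmaFinite.f_integral// nu_density.
Qed.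

Lemma ge0_integral_density (G : T -> \bar R) : measurable_fun setT G ->
    (forall x, 0 <= G x) ->
  \int[nu]_x G x = \int[mu]_x (G x * (h x)%:E).
Proof.
move=> mG G0; have numu := dominates_density.
rewrite -(Radon_Nikodym_SigmaFinite.change_of_variables numu)//.
apply: ae_eq_integral => //.
- apply: emeasurable_funM => //.
  exact: measurable_int (Radon_Nikodym_SigmaFinite.f_integrable _).
- by apply: emeasurable_funM => //; exact/measurable_EFinP.
- exact/ae_eqe_mul2l/ae_eq_Radon_Nikodym_density.
Qed.

End integral_density.

Lemma measurable_funV_ge0 d (T : measurableType d) (R : realType) (f : T -> R) :
  measurable_fun setT f -> (forall x, 0 <= f x) ->
  measurable_fun setT (fun x => (f x)^-1).
Proof.
move=> mf f0; rewrite (_ : (fun x => _) = (fun x => f x `^ (-1))).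
  exact: measurableT_comp (measurable_powR _) mf.
by apply/funext => x; rewrite powR_inv1.
Qed.

Section random_variable_density.
Local Open Scope ereal_scope.
Context d (T : measurableType d) (R : realType) (P : probability T R).
Variables (X : {RV P >-> R}) (h : R -> R).
Hypotheses (mh : measurable_fun setT h) (h_gt0 : forall x, (0 < h x)%R)
  (X_density : forall A, measurable A ->
     P (X @^-1` A) = \int[lebesgue_measure]_(x in A) (h x)%:E).

Lemma ge0_integral_RV_density (G : R -> \bar R) : measurable_fun setT G ->
    (forall x, 0 <= G x) ->
  \int[P]_w G (X w) = \int[lebesgue_measure]_x (G x * (h x)%:E).
Proof.
move=> mG G0.
(* [lebesgue_measure] lives on [measurableTypeR R], which has the same
   measurable sets as [R]; recast [X] accordingly. *)
have mXR : (X : T -> measurableTypeR R) \in mfun.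
  by rewrite inE; exact: measurable_funPT X.
pose XR := mfun_Sub mXR.
rewrite -[LHS]/(\int[P]_(w in XR @^-1` setT) (G \o XR) w).
rewrite -(ge0_integral_pushforward (measurable_funPT XR)) //.
apply: (@ge0_integral_density _ _ _ lebesgue_measure (distribution P XR)) => //.
Qed.

Lemma ge0_integral_RV_density_ratio (G : R -> \bar R) : measurable_fun setT G ->
    (forall x, 0 <= G x) ->
  \int[P]_w (G (X w) * ((h (X w))^-1)%:E) = \int[lebesgue_measure]_x G x.
Proof.
move=> mG G0; rewrite (@ge0_integral_RV_density (fun x => G x * ((h x)^-1)%:E)).
- by apply: eq_integral => x _; rewrite -muleA -EFinM mulVf ?mule1 ?gt_eqF.
- apply: emeasurable_funM => //; apply/measurable_EFinP.
  by apply: measurable_funV_ge0 => // x; exact: ltW.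
- by move=> x; rewrite mule_ge0 // lee_fin invr_ge0 ltW.
Qed.

Lemma ge0_integral_RV_sup01_ratio (F : R -> R -> R) :
    (forall t x, I01 t -> (0 <= F t x)%R) ->
    measurable_fun setT (fun x => sup01 (F ^~ x)) ->
  \int[P]_w sup01 (fun t => F t (X w) / h (X w))%R =
  \int[lebesgue_measure]_x sup01 (F ^~ x).
Proof.
move=> F0 mF; rewrite -ge0_integral_RV_density_ratio//; last first.
  by move=> x; apply: sup01_ge0 => t /F0.
by apply: eq_integral => w _; rewrite sup01_Mr// invr_gt0.
Qed.

End random_variable_density.

Theorem proposition2p2 (R : realType) (g : R -> R -> R)
  (Hdens : forall t, I01 t -> is_prob_density (g t))
  (Hcont : forall s, {within I01, continuous (fun t => g t s)})
  (Hint : (\int[lebesgue_measure]_s sup01 (fun t => g t s) < +oo)%E)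
  (d : measure_display) (T : measurableType d) (P : probability T R)
  (X : {RV P >-> R}) (h : R -> R)
  (Hhm : measurable_fun setT h) (Hhpos : forall x, 0 < h x)
  (HXh : forall A : set R, measurable A ->
     P (X @^-1` A) = (\int[lebesgue_measure]_(x in A) (h x)%:E)%E) :
  is_generator P (Zproc g h X) /\
  (forall f : R -> R, E01 f -> gstar_norm g f = Dnorm P (Zproc g h X) f).
Proof.
have g0 t s : I01 t -> 0 <= g t s by move=> /Hdens[_ []].
have mg t : I01 t -> measurable_fun setT (g t) by move=> /Hdens[].
have cg s t : I01 t -> (fun u => g u s) @ within I01 (nbhs t) --> g t s.
  by move=> It; move: (Hcont s) => /subspace_continuousP; apply.
have mX := measurable_funPT X.
have h0 x : 0 <= h x := ltW (Hhpos x).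
have int_ratio := ge0_integral_RV_sup01_ratio Hhm Hhpos HXh.
split; [split; [|split; [|split]]|].
- move=> t It; apply: measurable_funM; first exact: measurableT_comp (mg t It) mX.
  exact: measurableT_comp (measurable_funV_ge0 Hhm h0) mX.
- move=> w; split => [|t It]; last by rewrite divr_ge0 ?g0.
  by apply/subspace_continuousP => t It; apply: cvgMr_tmp; exact: cg.
- move=> t It; have [_ [_ <-]] := Hdens t It.
  under eq_integral do rewrite EFinM.
  rewrite (ge0_integral_RV_density_ratio Hhm Hhpos HXh (G := fun s => (g t s)%:E))//.
    by apply/measurable_EFinP; exact: mg.
  by move=> s; rewrite lee_fin g0.
- rewrite /Zproc (int_ratio g)//.
  by apply: (measurable_sup01 (l := [::])) => // s t It _; exact: cg.
- move=> f /E01_continuous_off_seq[l cf].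
  rewrite /Dnorm /gstar_norm -int_ratio; last 2 first.
  + by move=> t x It; rewrite mulr_ge0 ?g0.
  + apply: (measurable_sup01 (l := l)) => [t It|s t It tl].
      by apply: measurable_funM => //; exact: mg.
    by apply: cvgM; [apply: cvg_norm; exact: cf|exact: cg].
  apply: eq_integral => w _; apply: eq_sup01 => t It.
  by rewrite /Zproc normrM -mulrA [`|_ / _|]ger0_norm // divr_ge0 ?g0.
Qed.
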